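(* Let $e,f,g$ be the three edges at a vertex $v$, with $g$ the designated minimal edge at $v$ (so $e$ and $f$ are linked). Fix $\lambda(g)$ and the values of $\lambda$ on all edges other than $e,f$. Then $$\int\frac{d\lambda(e)\,d\lambda(f)}{\lambda(e)\lambda(f)}<2,$$ where the integral is over the set of $(\lambda(e),\lambda(f))\in(0,\infty)^2$ for which the resulting point lies in $\Delta_L$.
   Context: $\Gamma$ is a finite trivalent graph with edge set $E$. A linking choice $L$ assigns to each vertex one of its three edges, the designated minimal edge. $\Delta_L$ is the set of $\lambda\in(0,\infty)^E$ such that, at every vertex with edges $a,b,c$: - the triangle inequalities $\lambda(a)\le\lambda(b)+\lambda(c)$, $\lambda(b)\le\lambda(a)+\lambda(c)$, $\lambda(c)\le\lambda(a)+\lambda(b)$ hold, and - the designated minimal edge has $\lambda$-value at most those of the other two. *)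

From HB Require Import structures.
From mathcomp Require Import all_boot all_order all_algebra.
From mathcomp Require Import all_classical all_reals all_analysis.
Set Implicit Arguments. Unset Strict Implicit. Unset Printing Implicit Defensive.
Import Order.TTheory GRing.Theory Num.Theory.
Local Open Scope ring_scope.

(* A finite trivalent (multi)graph, given by half-edges: [star v i] (i < 3)
   is the i-th edge at vertex v; every edge has exactly two half-edges. *)
Definition trivalent (V E : finType) (star : V -> 'I_3 -> E) : Prop :=
  forall e : E, #|[set p : V * 'I_3 | star p.1 p.2 == e]| = 2%N.

(* A linking choice is L : V -> 'I_3, the index at v of the designated minimal
   edge [star v (L v)]. *)

Definition DeltaL (R : realType) (V E : finType) (star : V -> 'I_3 -> E)
    (L : V -> 'I_3) : set (E -> R) :=
  [set lam | (forall x, 0 < lam x) /\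
     forall v : V,
       let a := lam (star v 0) in
       let b := lam (star v 1) in
       let c := lam (star v 2) in
       [/\ a <= b + c, b <= a + c, c <= a + b &
           forall i : 'I_3, lam (star v (L v)) <= lam (star v i)]].

Definition upd2 (R : Type) (E : eqType) (lam0 : E -> R) (e f : E) (x y : R)
  : E -> R := fun d => if d == e then x else if d == f then y else lam0 d.

From HB Require Import structures.
From mathcomp Require Import all_boot all_order all_algebra.
From mathcomp Require Import all_classical all_reals all_analysis.
From mathcomp Require Import ring lra zify measurable_realfun.
Import Order.TTheory GRing.Theory Num.Theory.
Local Open Scope classical_set_scope.
Local Open Scope ring_scope.

(* At v the minimal edge g carries c := lam0 g, so the triangle inequalities
   and the minimality of g confine every admissible (x, y) to the strip
   c <= x, c <= y, |x - y| <= c.  By AM-GM, 1/(xy) <= 1/(2x^2) + 1/(2y^2).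
   Cut the x-axis into intervals of length c/8 starting at c: on the n-th one
   1/(2x^2) is at most its value at the left end, and the y-section of the strip
   lies in an interval of length c (n + 17 - max(8, n)) / 8.  These step
   functions and their mirror images dominate 1/(xy) on the strip, and their
   integrals add up to sum_n (n + 17 - max(8, n)) / (n + 8)^2 <= 29/15 < 2. *)

(* Unlike [ge0_le_integral], no measurability of [D] or [f] is needed: the
   nonnegative integral is a supremum over simple functions below [f]. *)
Lemma le_integral_dominated {d} {T : measurableType d} {R : realType}
    (mu : {measure set T -> \bar R}) {D : set T} {f g : T -> \bar R} :
  (forall x, D x -> (0 <= f x)%E) -> (forall x, (0 <= g x)%E) ->
  (forall x, D x -> (f x <= g x)%E) ->
  (\int[mu]_(x in D) f x <= \int[mu]_x g x)%E.
Proof.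
move=> f_ge0 g_ge0 fg.
rewrite ge0_integralE // ge0_integralTE //.
apply: ereal_sup_le => _ [h hf <-]; exists h => //= x.
apply: le_trans (hf x) _; rewrite /patch; case: ifP => [/set_mem Dx|_].
  exact: fg.
exact: g_ge0.
Qed.

Lemma measurable_scaled_indicX d1 d2 (T1 : measurableType d1)
    (T2 : measurableType d2) (R : realType) (A1 : set T1) (A2 : set T2) (k : R) :
  measurable A1 -> measurable A2 ->
  measurable_fun setT (fun p => (k * \1_(A1 `*` A2) p)%:E).
Proof.
move=> mA1 mA2; apply/measurable_EFinP; apply: measurable_funM.
  exact: measurable_cst.
by apply: measurable_indic; exact: measurableX mA1 mA2.
Qed.

Lemma integral_indicX d1 d2 (T1 : measurableType d1) (T2 : measurableType d2)
    (R : realType) (m1 : {measure set T1 -> \bar R})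
    (m2 : {sigma_finite_measure set T2 -> \bar R}) (A1 : set T1) (A2 : set T2) (k : R) :
  measurable A1 -> measurable A2 -> 0 <= k ->
  (\int[m1 \x m2]_p (k * \1_(A1 `*` A2) p)%:E = k%:E * (m1 A1 * m2 A2))%E.
Proof.
move=> mA1 mA2 k_ge0.
have mA : measurable (A1 `*` A2) := measurableX mA1 mA2.
under eq_integral do rewrite EFinM.
rewrite ge0_integralZl_EFin //.
- by rewrite integral_indic // setIT; congr (_ * _)%E; exact: product_measure1E.
- by apply/measurable_EFinP; exact: measurable_indic.
Qed.

Lemma lee_nneseries_term {R : realType} {u : (\bar R)^nat} :
  (forall n, (0 <= u n)%E) -> forall k, (u k <= \sum_(n <oo) u n)%E.
Proof.
move=> u_ge0 k; rewrite (nneseriesD1 (n := k)) //.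
by rewrite leeDl // nneseries_ge0.
Qed.

Lemma inv_mul_le_mean_inv_sqr (R : realFieldType) (x y : R) :
  0 < x -> 0 < y -> (x * y)^-1 <= (2 * x ^+ 2)^-1 + (2 * y ^+ 2)^-1.
Proof.
move=> x_gt0 y_gt0.
have -> : (2 * x ^+ 2)^-1 + (2 * y ^+ 2)^-1 =
          (x * y)^-1 + (x - y) ^+ 2 / (2 * x ^+ 2 * y ^+ 2).
  by field; rewrite !gt_eqF.
by rewrite lerDl divr_ge0 ?sqr_ge0 // !mulr_ge0 // ltW.
Qed.

Lemma triangle_ineq_perm {R : realDomainType} (s : 'I_3 -> R) :
  s 0 <= s 1 + s 2 -> s 1 <= s 0 + s 2 -> s 2 <= s 0 + s 1 ->
  forall p q r : 'I_3, p != q -> p != r -> q != r -> s p <= s q + s r.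
Proof.
move=> h0 h1 h2.
have ord3 (k : 'I_3) : [\/ k = 0, k = 1 | k = 2].
  case: k => [[|[|[|k]]] lt_k3] //.
  - by apply: Or31; apply: val_inj.
  - by apply: Or32; apply: val_inj.
  - by apply: Or33; apply: val_inj.
move=> p q r.
by case: (ord3 p) => ->; case: (ord3 q) => ->; case: (ord3 r) => -> //= _ _ _; lra.
Qed.

Definition strip {R : realDomainType} (c : R) : set (R * R) :=
  [set p | [/\ 0 < c, c <= p.1, c <= p.2, p.1 <= p.2 + c & p.2 <= p.1 + c]].

Lemma DeltaL_upd2_strip (R : realType) (V E : finType) (star : V -> 'I_3 -> E)
    (L : V -> 'I_3) (v : V) (i j : 'I_3) (lam0 : E -> R) (x y : R) :
  star v i != star v j -> star v i != star v (L v) -> star v j != star v (L v) ->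
  DeltaL star L (upd2 lam0 (star v i) (star v j) x y) ->
  strip (lam0 (star v (L v))) (x, y).
Proof.
move=> ij iL jL [lam_gt0 /(_ v) [t0 t1 t2 lam_min]].
set lam := upd2 _ _ _ _ _ in lam_gt0 t0 t1 t2 lam_min.
have lam_i : lam (star v i) = x by rewrite /lam /upd2 eqxx.
have lam_j : lam (star v j) = y by rewrite /lam /upd2 eq_sym (negbTE ij) eqxx.
have lam_L : lam (star v (L v)) = lam0 (star v (L v)).
  by rewrite /lam /upd2 eq_sym (negbTE iL) eq_sym (negbTE jL).
have neq_ord a b : star v a != star v b -> a != b by apply: contra => /eqP ->.
have ji : star v j != star v i by rewrite eq_sym.
have tri := triangle_ineq_perm (fun k => lam (star v k)) t0 t1 t2.
have := tri i j (L v) (neq_ord _ _ ij) (neq_ord _ _ iL) (neq_ord _ _ jL).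
have := tri j i (L v) (neq_ord _ _ ji) (neq_ord _ _ jL) (neq_ord _ _ iL).
have := lam_min i; have := lam_min j; have := lam_gt0 (star v (L v)).
by rewrite lam_i lam_j lam_L /strip /=; split; lra.
Qed.

Section cell_mass.
Variable R : realFieldType.

Definition cell_mass (n : nat) : R :=
  ((n + 17)%N%:R - (maxn 8 n)%:R) / (n + 8)%N%:R ^+ 2.

Lemma cell_mass_ge0 n : 0 <= cell_mass n.
Proof.
rewrite divr_ge0 ?exprn_ge0 ?ler0n // subr_ge0 ler_nat geq_max.
by apply/andP; split; lia.
Qed.

Lemma sum_cell_mass_lt8 : \sum_(0 <= k < 8) cell_mass k <= 4 / 5.
Proof.
by rewrite /index_iota /= !big_cons big_nil /cell_mass /maxn /addn /addn_rec /=; lra.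
Qed.

Lemma inv_sqr_le_telescope (x : R) :
  0 < x -> ((x + 1) ^+ 2)^-1 <= x^-1 - (x + 1)^-1.
Proof.
move=> x_gt0.
have -> : x^-1 - (x + 1)^-1 = ((x + 1) ^+ 2)^-1 + (x * (x + 1) ^+ 2)^-1.
  by field; rewrite !gt_eqF //; lra.
by rewrite lerDl invr_ge0 mulr_ge0 ?exprn_ge0 //; lra.
Qed.

(* For n >= 8, cell_mass n = 17/(n+8)^2 <= 17/(n+7) - 17/(n+8); together with
   the head bound 4/5 this gives 4/5 + 17/15 = 29/15. *)
Lemma sum_cell_mass_le_telescope N :
  \sum_(0 <= k < N + 8) cell_mass k <= 29 / 15 - 17 / (N%:R + 15).
Proof.
elim: N => [|N IH]; first by rewrite add0r; apply: le_trans sum_cell_mass_lt8 _; lra.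
rewrite addSn big_nat_recr //=.
have -> : cell_mass (N + 8) = 17 / (N%:R + 16) ^+ 2.
  rewrite /cell_mass (maxn_idPr (leq_addl N 8)) !natrD.
  by congr (_ / _ ^+ 2); lra.
have := inv_sqr_le_telescope (N%:R + 15) (ltr_wpDl (ler0n _ _) (ltr0n _ 15)).
have -> : N%:R + 15 + 1 = N%:R + 16 :> R by lra.
have -> : N.+1%:R + 15 = N%:R + 16 :> R by rewrite -natr1; lra.
by move: IH; lra.
Qed.

Lemma sum_cell_mass_le N : \sum_(0 <= k < N) cell_mass k <= 29 / 15.
Proof.
apply: le_trans (_ : \sum_(0 <= k < N + 8) cell_mass k <= _).
  rewrite [leRHS](big_cat_nat (n := N)) ?leq_addr //= lerDl.
  by apply: sumr_ge0 => k _; apply: cell_mass_ge0.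
apply: le_trans (sum_cell_mass_le_telescope N) _.
by rewrite lerBlDr lerDl divr_ge0.
Qed.

End cell_mass.

Lemma cell_mass_series_le (R : realType) :
  (\sum_(n <oo) (cell_mass R n)%:E <= (29 / 15)%:E)%E.
Proof.
apply: lime_le; first by apply: is_cvg_nneseries => n _ _; rewrite lee_fin cell_mass_ge0.
by apply: nearW => N /=; rewrite sumEFin lee_fin sum_cell_mass_le.
Qed.

Section strip_cover.
Context {R : realType}.
Implicit Types (c x y : R) (n : nat).

(* With steps of width c/4 instead of c/8 the final bound would exceed 2. *)
Definition step_itv c n : set R := `[c * (n + 8)%N%:R / 8, c * (n + 9)%N%:R / 8[.

Definition range_itv c n : set R := `[c * (maxn 8 n)%:R / 8, c * (n + 17)%N%:R / 8[.

Definition cell_height c n : R := (2 * (c * (n + 8)%N%:R / 8) ^+ 2)^-1.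

Definition cell_fun c n (p : R * R) : \bar R :=
  ((cell_height c n * \1_(step_itv c n `*` range_itv c n) p)%:E +
   (cell_height c n * \1_(range_itv c n `*` step_itv c n) p)%:E)%E.

Lemma cell_height_ge0 c n : 0 <= cell_height c n.
Proof. by rewrite invr_ge0 mulr_ge0 ?sqr_ge0. Qed.

Lemma cell_fun_ge0 c n p : (0 <= cell_fun c n p)%E.
Proof. by rewrite adde_ge0 // lee_fin mulr_ge0 ?cell_height_ge0. Qed.

Lemma measurable_cell_fun c n : measurable_fun setT (cell_fun c n).
Proof.
by apply: emeasurable_funD; apply: measurable_scaled_indicX; exact: measurable_itv.
Qed.

Lemma measure_step_itv c n : 0 < c ->
  lebesgue_measure (step_itv c n) = (c / 8)%:E.
Proof.
move=> c_gt0; rewrite lebesgue_measure_itv /= lte_fin.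
rewrite ifT; last by rewrite ltr_pM2r ?invr_gt0 // ltr_pM2l // ltr_nat; lia.
by rewrite -EFinD !natrD; congr EFin; field.
Qed.

Lemma measure_range_itv c n : 0 < c ->
  lebesgue_measure (range_itv c n) = (c * ((n + 17)%N%:R - (maxn 8 n)%:R) / 8)%:E.
Proof.
move=> c_gt0; rewrite lebesgue_measure_itv /= lte_fin.
rewrite ifT; last first.
  by rewrite ltr_pM2r ?invr_gt0 // ltr_pM2l // ltr_nat gtn_max; apply/andP; split; lia.
by rewrite -EFinD; congr EFin; field.
Qed.

Lemma integral_cell_fun c n : 0 < c ->
  (\int[(@lebesgue_measure R \x @lebesgue_measure R)%E]_p cell_fun c n p =
   (cell_mass R n)%:E)%E.
Proof.
move=> c_gt0.
have mstep : measurable (step_itv c n) by exact: measurable_itv.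
have mrange : measurable (range_itv c n) by exact: measurable_itv.
rewrite ge0_integralD //; last 4 first.
- by move=> p _; rewrite lee_fin mulr_ge0 ?cell_height_ge0.
- exact: measurable_scaled_indicX.
- by move=> p _; rewrite lee_fin mulr_ge0 ?cell_height_ge0.
- exact: measurable_scaled_indicX.
rewrite !integral_indicX ?cell_height_ge0 //.
set len := c * ((n + 17)%N%:R - (maxn 8 n)%:R) / 8.
transitivity ((cell_height c n)%:E * ((c / 8)%:E * len%:E) +
              (cell_height c n)%:E * (len%:E * (c / 8)%:E))%E.
  by rewrite -(measure_step_itv c n c_gt0) -(measure_range_itv c n c_gt0).
rewrite -!EFinM -EFinD; congr EFin.
rewrite /len /cell_height /cell_mass; field.
by rewrite -natrD pnatr_eq0 addn_eq0 andbF gt_eqF.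
Qed.

Lemma inv_sqr_le_cell_height c x n : 0 < c -> step_itv c n x ->
  (2 * x ^+ 2)^-1 <= cell_height c n.
Proof.
move=> c_gt0; rewrite /step_itv /= in_itv /= => /andP [lo_x _].
have lo_gt0 : 0 < c * (n + 8)%N%:R / 8.
  by rewrite divr_gt0 // mulr_gt0 // ltr0n addn_gt0 orbT.
have x_gt0 : 0 < x by lra.
rewrite /cell_height lef_pV2 ?posrE ?mulr_gt0 ?exprn_gt0 //.
by rewrite ler_pM2l // lerXn2r // nnegrE ltW.
Qed.

Lemma strip_sym {c x y} : strip c (x, y) -> strip c (y, x).
Proof. by case=> /= *; split. Qed.

Lemma strip_step_range {c x y} : strip c (x, y) ->
  exists n, step_itv c n x /\ range_itv c n y.
Proof.
case=> /= c_gt0 cx cy xy yx.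
have u_ge0 : 0 <= 8 * x / c by rewrite divr_ge0 //; lra.
set m := Num.truncn (8 * x / c).
have /andP [m_le m_gt] := truncn_itv u_ge0.
rewrite -/m ler_pdivlMr // in m_le; rewrite -/m ltr_pdivrMr // -natr1 in m_gt.
have m_ge8 : (8 <= m)%N by rewrite truncn_ge_nat // ler_pdivlMr //; lra.
exists (m - 8)%N; rewrite /step_itv /range_itv /= !in_itv /=.
have -> : (m - 8 + 8 = m)%N by lia.
have -> : (m - 8 + 9 = m + 1)%N by lia.
have -> : (m - 8 + 17 = m + 9)%N by lia.
rewrite !natrD; split; apply/andP; split; [lra | lra | | lra].
have [le8 | _] := leqP 8 (m - 8); last by lra.
by rewrite natrB //; lra.
Qed.

Lemma inv_mul_le_cell_series c x y : strip c (x, y) ->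
  (((x * y)^-1)%:E <= \sum_(n <oo) cell_fun c n (x, y))%E.
Proof.
move=> sxy; case: (sxy) => /= c_gt0 cx cy _ _.
have [n0 [x_n0 y_n0]] := strip_step_range sxy.
have [n1 [y_n1 x_n1]] := strip_step_range (strip_sym sxy).
have summand_ge0 (A : set (R * R)) n : (0 <= (cell_height c n * \1_A (x, y))%:E)%E.
  by rewrite lee_fin mulr_ge0 ?cell_height_ge0.
rewrite /cell_fun nneseriesD; [|by move=> *..].
apply: le_trans (_ : ((2 * x ^+ 2)^-1)%:E + ((2 * y ^+ 2)^-1)%:E <= _)%E.
  by rewrite -EFinD lee_fin inv_mul_le_mean_inv_sqr //; lra.
apply: leeD.
- apply: le_trans (lee_nneseries_term _ n0); last by move=> n; exact: summand_ge0.
  by rewrite indicE mem_set //= mulr1 lee_fin inv_sqr_le_cell_height.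
- apply: le_trans (lee_nneseries_term _ n1); last by move=> n; exact: summand_ge0.
  by rewrite indicE mem_set //= mulr1 lee_fin inv_sqr_le_cell_height.
Qed.

Lemma integral_inv_mul_strip_lt2 c (D : set (R * R)) : D `<=` strip c ->
  (\int[(@lebesgue_measure R \x @lebesgue_measure R)%E]_(p in D)
     ((p.1 * p.2)^-1)%:E < 2%:E)%E.
Proof.
move=> D_strip; have [c_le0 | c_gt0] := lerP c 0.
  suff -> : D = set0 by rewrite integral_set0 lte_fin.
  by rewrite -subset0 => p /D_strip [c_gt0 _ _ _ _]; lra.
pose g p := (\sum_(n <oo) cell_fun c n p)%E.
apply: le_lt_trans
  (le_integral_dominated (lebesgue_measure \x lebesgue_measure)%E (g := g) _ _ _) _.
- by move=> [x y] /D_strip [_ cx cy _ _]; rewrite lee_fin invr_ge0 mulr_ge0 //; lra.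
- by move=> p; apply: nneseries_ge0 => n _ _; exact: cell_fun_ge0.
- by move=> [x y] /D_strip; exact: inv_mul_le_cell_series.
rewrite integral_nneseries //; last 2 first.
- by move=> n; exact: measurable_cell_fun.
- by move=> n p _; exact: cell_fun_ge0.
rewrite (eq_eseriesr (fun n _ => integral_cell_fun c n c_gt0)).
by apply: le_lt_trans (cell_mass_series_le R) _; rewrite lte_fin; lra.
Qed.

End strip_cover.

Theorem mainTheorem9 (R : realType) (V E : finType) (star : V -> 'I_3 -> E)
  (L : V -> 'I_3) (v : V) (e f g : E) (lam0 : E -> R) :
  trivalent star ->
  e != f -> e != g -> f != g ->
  star v (L v) = g ->
  (exists i j : 'I_3, [/\ i != L v, j != L v, star v i = e & star v j = f]) ->
  (\int[(@lebesgue_measure R \x @lebesgue_measure R)%E]_(p in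
      [set p : R * R | (0 < p.1)%R /\ (0 < p.2)%R /\
                       DeltaL star L (upd2 lam0 e f p.1 p.2)])
     ((p.1 * p.2)^-1)%R%:E < 2%:E)%E.
Proof.
move=> _ ef eg fg gL [i [j [_ _ ei fj]]]; subst e f g.
apply: (integral_inv_mul_strip_lt2 (lam0 (star v (L v)))) => -[x y] /= [_ [_]].
exact: DeltaL_upd2_strip.
Qed.
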